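(* If $R$ is a weakly generalized p.q.-Baer $*$-ring, then the involution of $R$ is quasi-proper, i.e. for $x\in R$, $xRx^*=0$ implies $x^n=0$ for some $n\in\mathbb N$.
   Context: A $*$-ring is a ring with an involution; a projection is $e$ with $e=e^*=e^2$. A $*$-ring $R$ is a weakly generalized p.q.-Baer $*$-ring if for every $x\in R$ there exist a central projection $e$ and $n\in\mathbb N$ such that $x^ne=x^n$ and, for all $y\in R$, $(xR)^ny=\{0\}$ if and only if $ey=0$. ($R$ need not have a unity.) *)

From HB Require Import structures.
From mathcomp Require Import all_boot all_algebra.
Set Implicit Arguments. Unset Strict Implicit. Unset Printing Implicit Defensive.
Import GRing.Theory.
Local Open Scope ring_scope.

Record is_star_rng (T : zmodType) (mul : T -> T -> T) (star : T -> T) : Prop := {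
  srng_mulA : forall x y z, mul x (mul y z) = mul (mul x y) z;
  srng_mulDl : forall x y z, mul (x + y) z = mul x z + mul y z;
  srng_mulDr : forall x y z, mul x (y + z) = mul x y + mul x z;
  srng_starD : forall x y, star (x + y) = star x + star y;
  srng_starM : forall x y, star (mul x y) = mul (star y) (star x);
  srng_starK : forall x, star (star x) = x
}.

(* positive power x^n (meaningful for n >= 1; x^1 = x) *)
Definition rpow (T : Type) (mul : T -> T -> T) (x : T) (n : nat) : T :=
  iter n.-1 (mul x) x.

Definition central_projection (T : zmodType) (mul : T -> T -> T) (star : T -> T)
  (e : T) : Prop :=
  e = star e /\ mul e e = e /\ forall z, mul e z = mul z e.

(* (xR)^n y = {0}: every product (x r_1)(x r_2)...(x r_n) y vanishes *)
Definition xRpow_ann (T : zmodType) (mul : T -> T -> T) (x : T) (n : nat) (y : T)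
  : Prop :=
  forall s : seq T, size s = n ->
    foldr (fun r acc => mul (mul x r) acc) y s = 0.

Definition weakly_gen_pq_Baer (T : zmodType) (mul : T -> T -> T) (star : T -> T)
  : Prop :=
  forall x : T, exists (e : T) (n : nat),
    [/\ (0 < n)%N, central_projection mul star e,
        mul (rpow mul x n) e = rpow mul x n &
        forall y : T, xRpow_ann mul x n y <-> mul e y = 0].

Definition quasi_proper (T : zmodType) (mul : T -> T -> T) (star : T -> T) : Prop :=
  forall x : T, (forall r : T, mul (mul x r) (star x) = 0) ->
    exists n : nat, (0 < n)%N /\ rpow mul x n = 0.

From mathcomp Require Import all_boot all_algebra.
Set Implicit Arguments.
Unset Strict Implicit.
Import GRing.Theory.
Local Open Scope ring_scope.

(* If x R x^* = 0 then every product (x r_1)...(x r_n) x^* ends in x r_n x^* = 0,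
   so x^* is annihilated by (xR)^n and hence by the projection e.
   Applying the involution gives x e = 0 (only e = e^* is needed, not the
   centrality of e), and therefore x^n = x^n e = 0. *)

Section StarRng.

Variables (T : zmodType) (mul : T -> T -> T) (star : T -> T).
Hypothesis HR : is_star_rng mul star.

Lemma srng_mulr0 (a : T) : mul a 0 = 0.
Proof.
apply: (@addrI _ (mul a 0)).
by rewrite addr0 -(srng_mulDr HR) addr0.
Qed.

Lemma srng_star0 : star 0 = 0.
Proof.
apply: (@addrI _ (star 0)).
by rewrite addr0 -(srng_starD HR) addr0.
Qed.

Lemma xRpow_ann_of_right_ann (x y : T) (n : nat) :
  (forall r, mul (mul x r) y = 0) -> (0 < n)%N -> xRpow_ann mul x n y.
Proof.
move=> xRy n_gt0 s; elim: s n n_gt0 => [|r s IHs] [|n] // _ [size_s].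
case: s IHs size_s => [|r' s] IHs size_s; first by rewrite /= xRy.
by rewrite /= in IHs *; rewrite (IHs n) ?srng_mulr0 // -size_s.
Qed.

Lemma selfadjoint_right_ann_star (e y : T) :
  e = star e -> mul e y = 0 -> mul (star y) e = 0.
Proof.
move=> e_sa ey0.
rewrite -(srng_starK HR (mul (star y) e)) (srng_starM HR) (srng_starK HR).
by rewrite -e_sa ey0 srng_star0.
Qed.

Lemma rpow_right_ann (x e : T) (n : nat) :
  mul x e = 0 -> (0 < n)%N -> mul (rpow mul x n) e = 0.
Proof.
move=> xe0; case: n => // n _; elim: n => [|n IHn] //=.
by rewrite -(srng_mulA HR) IHn srng_mulr0.
Qed.

End StarRng.

Theorem mainTheorem8 (T : zmodType) (mul : T -> T -> T) (star : T -> T)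
  (HR : is_star_rng mul star) (HB : weakly_gen_pq_Baer mul star) :
  quasi_proper mul star.
Proof.
move=> x xRxstar.
have [e [n [n_gt0 [e_sa _] xne annP]]] := HB x.
have ex_star : mul e (star x) = 0.
  by apply/annP; exact (xRpow_ann_of_right_ann HR xRxstar n_gt0).
have xe0 : mul x e = 0.
  by have := selfadjoint_right_ann_star HR e_sa ex_star; rewrite (srng_starK HR).
by exists n; split; rewrite // -xne (rpow_right_ann HR).
Qed.
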